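(* Let $(X,d)$ be a compact metric space, $Z=\Delta_f(X)$, and $F:X\rightrightarrows Z$ a correspondence with nonempty values which is non expansive for $d_{KR}$: for all $x,x'\in X$ and $u\in F(x)$ there exists $u'\in F(x')$ with $d_{KR}(u,u')\le d(x,x')$. Then the mixed extension $\hat F$ is $1$-Lipschitz (non expansive) from $(Z,d_{KR})$ to itself: for all $u_1,u_2\in Z$ and $v_1\in\hat F(u_1)$, there exists $v_2\in\hat F(u_2)$ with $d_{KR}(v_1,v_2)\le d_{KR}(u_1,u_2)$.
   Context: $d_{KR}(u,v)=\sup\{\int f\,du-\int f\,dv:\ f:X\to\mathbb R\ 1\text{-Lipschitz}\}$ is the Kantorovich–Rubinstein distance on Borel probabilities on $X$. $\Delta_f(X)$ is the set of finitely supported probabilities on $X$. The mixed extension is $$\hat F(u)=\Big\{\sum_{x}u(x)f(x):\ f:X\to Z,\ f(x)\in\mathrm{conv}\,F(x)\ \forall x\Big\}.$$ *)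

From Stdlib Require Import Reals List.
Open Scope R_scope.

Fixpoint sumlist {A : Type} (g : A -> R) (l : list A) : R :=
  match l with nil => 0 | a :: l' => g a + sumlist g l' end.

Definition is_metric {X : Type} (d : X -> X -> R) : Prop :=
  (forall x y, 0 <= d x y) /\
  (forall x y, d x y = 0 <-> x = y) /\
  (forall x y, d x y = d y x) /\
  (forall x y z, d x z <= d x y + d y z).

(* compactness = sequential compactness (equivalent for metric spaces) *)
Definition seq_compact {X : Type} (d : X -> X -> R) : Prop :=
  forall s : nat -> X, exists (phi : nat -> nat) (x : X),
    (forall n, (phi n < phi (S n))%nat) /\
    (forall eps, 0 < eps -> exists N, forall n, (N <= n)%nat -> d (s (phi n)) x < eps).

(* measures on X are represented by their weight functions X -> R *)
Definition supp_list {X : Type} (u : X -> R) (l : list X) : Prop :=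
  NoDup l /\ forall x, u x <> 0 -> In x l.

Definition is_fprob {X : Type} (u : X -> R) : Prop :=
  (forall x, 0 <= u x) /\ exists l, supp_list u l /\ sumlist u l = 1.

Definition lipschitz1 {X : Type} (d : X -> X -> R) (f : X -> R) : Prop :=
  forall x y, Rabs (f x - f y) <= d x y.

(* The set { int f du - int f dv : f 1-Lipschitz }; for finitely supported
   u,v, int f du = sum over a support list of u x * f x. *)
Definition KR_set {X : Type} (d : X -> X -> R) (u v : X -> R) (r : R) : Prop :=
  exists f l, lipschitz1 d f /\ supp_list u l /\ supp_list v l /\
    r = sumlist (fun x => u x * f x) l - sumlist (fun x => v x * f x) l.

(* d_KR(u,v) <= c, i.e. c is an upper bound of KR_set (sup <= c). *)
Definition dKR_le {X : Type} (d : X -> X -> R) (u v : X -> R) (c : R) : Prop :=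
  forall r, KR_set d u v r -> r <= c.

(* d_KR(u1,u2) <= d_KR(v1,v2), as a comparison of suprema:
   every upper bound of the second set bounds the first. *)
Definition dKR_le_dKR {X : Type} (d : X -> X -> R) (u1 u2 v1 v2 : X -> R) : Prop :=
  forall c, dKR_le d v1 v2 c -> dKR_le d u1 u2 c.

Definition in_conv {X : Type} (A : (X -> R) -> Prop) (w : X -> R) : Prop :=
  exists l : list (R * (X -> R)),
    (forall p, In p l -> 0 <= fst p /\ A (snd p)) /\
    sumlist fst l = 1 /\
    w = (fun y => sumlist (fun p => fst p * snd p y) l).

Definition mixed_ext {X : Type} (F : X -> (X -> R) -> Prop) (u v : X -> R) : Prop :=
  exists (f : X -> X -> R) (l : list X),
    (forall x, in_conv (F x) (f x)) /\ supp_list u l /\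
    v = (fun y => sumlist (fun x => u x * f x y) l).

From Stdlib Require Import Reals List Lra Permutation FunctionalExtensionality Classical ClassicalEpsilon.
Open Scope R_scope.

(* Let u1, u2 be finitely supported probabilities, carried by a common finite list S.
   Finite Kantorovich duality gives a coupling pi of u1 and u2 whose transport cost
   sum_{x,y} pi(x,y) d(x,y) is at most d_KR(u1,u2).  Write v1 = sum_x u1(x) f1(x) with
   each f1(x) a convex combination of points w of F(x).  Moving the mass pi(x,y) times
   the weight of w from w in F(x) to a point of F(y) that is d(x,y)-close to w produces
   some v2 in hat F(u2), and joint convexity of the Kantorovich-Rubinstein bound gives
   d_KR(v1,v2) <= cost(pi) <= d_KR(u1,u2). *)

Section Sums.
Context {A : Type}.

Lemma sumlist_app (g : A -> R) l1 l2 : sumlist g (l1 ++ l2) = sumlist g l1 + sumlist g l2.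
Proof. induction l1; simpl; [lra | rewrite IHl1; lra]. Qed.

Lemma sumlist_ext_in (f g : A -> R) l :
  (forall x, In x l -> f x = g x) -> sumlist f l = sumlist g l.
Proof. induction l; simpl; intros H; [reflexivity |]. rewrite H, IHl; auto. Qed.

Lemma sumlist_add (f g : A -> R) l : sumlist (fun x => f x + g x) l = sumlist f l + sumlist g l.
Proof. induction l; simpl; [lra | rewrite IHl; lra]. Qed.

Lemma sumlist_sub (f g : A -> R) l : sumlist (fun x => f x - g x) l = sumlist f l - sumlist g l.
Proof. induction l; simpl; [lra | rewrite IHl; lra]. Qed.

Lemma sumlist_scal (a : R) (f : A -> R) l : sumlist (fun x => a * f x) l = a * sumlist f l.
Proof. induction l; simpl; [lra | rewrite IHl; lra]. Qed.

Lemma sumlist_scalr (a : R) (f : A -> R) l : sumlist (fun x => f x * a) l = sumlist f l * a.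
Proof. induction l; simpl; [lra | rewrite IHl; lra]. Qed.

Lemma sumlist_zero (f : A -> R) l : (forall x, In x l -> f x = 0) -> sumlist f l = 0.
Proof. induction l; simpl; intros H; [reflexivity |]. rewrite H, IHl; auto; lra. Qed.

Lemma sumlist_le (f g : A -> R) l :
  (forall x, In x l -> f x <= g x) -> sumlist f l <= sumlist g l.
Proof.
  induction l; simpl; intros H; [lra |].
  assert (f a <= g a) by auto. assert (sumlist f l <= sumlist g l) by auto. lra.
Qed.

Lemma sumlist_nonneg (f : A -> R) l : (forall x, In x l -> 0 <= f x) -> 0 <= sumlist f l.
Proof.
  intros H. rewrite <- (sumlist_zero (fun _ => 0) l) by auto. apply sumlist_le; auto.
Qed.

Lemma sumlist_lt (f g : A -> R) l : (forall x, In x l -> f x <= g x) ->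
  (exists x, In x l /\ f x < g x) -> sumlist f l < sumlist g l.
Proof.
  induction l; simpl; intros H [x [Hx Hlt]]; [contradiction |].
  destruct Hx as [<- | Hx].
  - assert (sumlist f l <= sumlist g l) by (apply sumlist_le; auto). lra.
  - assert (f a <= g a) by auto. assert (sumlist f l < sumlist g l) by (apply IHl; eauto). lra.
Qed.

Lemma sumlist_zero_nonneg (f : A -> R) l : (forall x, In x l -> 0 <= f x) ->
  sumlist f l = 0 -> forall x, In x l -> f x = 0.
Proof.
  intros H0 Hs x Hx. destruct (H0 x Hx) as [Hp |]; [exfalso | auto].
  assert (0 < sumlist f l); [| lra].
  rewrite <- (sumlist_zero (fun _ => 0) l) by auto. apply sumlist_lt; eauto.
Qed.

Lemma sumlist_filter (g : A -> R) (p : A -> bool) l :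
  (forall x, In x l -> p x = false -> g x = 0) -> sumlist g l = sumlist g (filter p l).
Proof.
  induction l; simpl; intros H; [reflexivity |].
  destruct (p a) eqn:E; simpl; rewrite IHl; auto. rewrite H; auto; lra.
Qed.

Lemma sumlist_indep (g : A -> R) l1 l2 : NoDup l1 -> NoDup l2 ->
  (forall x, g x <> 0 -> In x l1) -> (forall x, g x <> 0 -> In x l2) ->
  sumlist g l1 = sumlist g l2.
Proof.
  intros N1 N2 H1 H2.
  set (p := fun x => if Req_dec_T (g x) 0 then false else true).
  assert (Hp : forall x, p x = false -> g x = 0).
  { intros x; unfold p; destruct (Req_dec_T (g x) 0); auto; discriminate. }
  rewrite (sumlist_filter g p l1), (sumlist_filter g p l2) by auto.
  assert (Hperm : Permutation (filter p l1) (filter p l2)).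
  { apply NoDup_Permutation; try apply NoDup_filter; auto.
    intros x; rewrite !filter_In; unfold p.
    destruct (Req_dec_T (g x) 0); split; intros [? ?]; try discriminate; auto. }
  induction Hperm; simpl; lra.
Qed.

End Sums.

Lemma sumlist_map {A B} (g : B -> R) (h : A -> B) l :
  sumlist g (map h l) = sumlist (fun x => g (h x)) l.
Proof. induction l; simpl; congruence. Qed.

Lemma sumlist_flat_map {A B} (g : B -> R) (h : A -> list B) l :
  sumlist g (flat_map h l) = sumlist (fun x => sumlist g (h x)) l.
Proof. induction l; simpl; [reflexivity |]. rewrite sumlist_app, IHl; reflexivity. Qed.

Lemma sumlist_swap {A B} (g : A -> B -> R) l (m : list B) :
  sumlist (fun a => sumlist (fun b => g a b) m) l = sumlist (fun b => sumlist (fun a => g a b) l) m.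
Proof.
  induction l; simpl.
  - symmetry; apply sumlist_zero; auto.
  - rewrite IHl, <- sumlist_add; reflexivity.
Qed.

Lemma sumlist_prod {A B} (g : A * B -> R) l m :
  sumlist g (list_prod l m) = sumlist (fun a => sumlist (fun b => g (a, b)) m) l.
Proof. induction l; simpl; [reflexivity |]. rewrite sumlist_app, sumlist_map, IHl; reflexivity. Qed.

Lemma NoDup_list_prod {A B} (l : list A) (m : list B) :
  NoDup l -> NoDup m -> NoDup (list_prod l m).
Proof.
  intros Nl Nm; induction Nl; simpl; [constructor |].
  apply NoDup_app; auto.
  - apply FinFun.Injective_map_NoDup; auto. intros a b E; congruence.
  - intros [a b] Ha Hb. apply in_map_iff in Ha as [y [E _]]. inversion E; subst.
    apply in_prod_iff in Hb as [? _]; contradiction.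
Qed.

Definition eqd {T} (x y : T) : R := if excluded_middle_informative (x = y) then 1 else 0.

Lemma sum_delta {T} (g : T -> R) l i : NoDup l -> In i l ->
  sumlist (fun x => g x * eqd x i) l = g i.
Proof.
  induction 1; simpl; intros Hi; [contradiction |].
  unfold eqd at 1; destruct (excluded_middle_informative (x = i)).
  - subst. rewrite sumlist_zero; [lra |]. intros y Hy; unfold eqd.
    destruct (excluded_middle_informative (y = i)); [subst; contradiction | lra].
  - destruct Hi as [-> | Hi]; [congruence |]. rewrite IHNoDup; auto; lra.
Qed.

Definition fin_supp {X : Type} (w : X -> R) : Prop := exists l, forall x, w x <> 0 -> In x l.

Lemma fprob_fin_supp {X : Type} (w : X -> R) : is_fprob w -> fin_supp w.
Proof. intros [_ [l [[_ Hl] _]]]. exists l; exact Hl. Qed.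

Lemma support_cover {X : Type} (Ws : list (X -> R)) (l : list X) :
  (forall w, In w Ws -> fin_supp w) ->
  exists T, NoDup T /\ (forall x, In x l -> In x T) /\
    (forall w x, In w Ws -> w x <> 0 -> In x T).
Proof.
  intros H.
  assert (Hcov : exists T0, (forall x, In x l -> In x T0) /\
                   forall w x, In w Ws -> w x <> 0 -> In x T0).
  { induction Ws as [| w Ws IH].
    - exists l; split; [auto | intros ? ? []].
    - destruct IH as [T0 [Hl HW]]; [intros; apply H; right; auto |].
      destruct (H w (or_introl eq_refl)) as [lw Hw].
      exists (lw ++ T0). split; [intros; apply in_or_app; auto |].
      intros w' x [<- | Hin] Hx; apply in_or_app; [left | right]; eauto. }
  destruct Hcov as [T0 [Hl HW]].
  exists (nodup (fun x y => excluded_middle_informative (x = y)) T0).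
  split; [apply NoDup_nodup |]. split; intros; apply nodup_In; eauto.
Qed.

(** Proof by elimination of one generator at a time. *)

Section Farkas.
Variables (C I : Type) (L : list C).

Definition pairing (y v : C -> R) : R := sumlist (fun c => y c * v c) L.

Definition in_cone (K : list I) (A : I -> C -> R) (b : C -> R) : Prop :=
  exists lam : I -> R, (forall k, In k K -> 0 <= lam k) /\
    forall c, In c L -> b c = sumlist (fun k => lam k * A k c) K.

Definition separates (K : list I) (A : I -> C -> R) (b y : C -> R) : Prop :=
  (forall k, In k K -> 0 <= pairing y (A k)) /\ pairing y b < 0.

Lemma pairing_lin_l a b y z v :
  pairing (fun c => a * y c - b * z c) v = a * pairing y v - b * pairing z v.
Proof. unfold pairing. rewrite <- !sumlist_scal, <- sumlist_sub. apply sumlist_ext_in; intros; ring. Qed.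

Lemma pairing_lin_r a b y v w :
  pairing y (fun c => a * v c - b * w c) = a * pairing y v - b * pairing y w.
Proof. unfold pairing. rewrite <- !sumlist_scal, <- sumlist_sub. apply sumlist_ext_in; intros; ring. Qed.

Definition extend (lam : I -> R) (k0 : I) (a : R) (k : I) : R :=
  if excluded_middle_informative (k = k0) then a else lam k.

Lemma in_cone_extend (K0 : list I) k0 (A : I -> C -> R) (b : C -> R) lam a :
  ~ In k0 K0 -> 0 <= a -> (forall k, In k K0 -> 0 <= lam k) ->
  (forall c, In c L -> b c = a * A k0 c + sumlist (fun k => lam k * A k c) K0) ->
  in_cone (k0 :: K0) A b.
Proof.
  intros Hk0 Ha Hlam Hb. exists (extend lam k0 a). split.
  - intros k Hk. unfold extend. destruct (excluded_middle_informative (k = k0)); auto.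
    destruct Hk as [-> | Hk]; [congruence | auto].
  - intros c Hc. simpl. unfold extend at 1.
    destruct (excluded_middle_informative (k0 = k0)) as [_ | []]; [| reflexivity].
    rewrite Hb by auto. f_equal. apply sumlist_ext_in. intros k Hk. unfold extend.
    destruct (excluded_middle_informative (k = k0)); [subst; contradiction | reflexivity].
Qed.

(* Projecting along A k0 in the direction annihilated by y yields a system on K0
   alone, whose two alternatives lift back to the system on k0 :: K0. *)
Section Elimination.
Variables (k0 : I) (K0 : list I) (A : I -> C -> R) (b y : C -> R).
Hypotheses (Hk0 : ~ In k0 K0) (Hy : separates K0 A b y) (Hneg : pairing y (A k0) < 0).

Definition proj_A (k : I) (c : C) : R := pairing y (A k) * A k0 c - pairing y (A k0) * A k c.
Definition proj_b (c : C) : R := pairing y b * A k0 c - pairing y (A k0) * b c.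

Lemma cone_lift : in_cone K0 proj_A proj_b -> in_cone (k0 :: K0) A b.
Proof.
  intros [mu [Hmu Hb]]. destruct Hy as [HyA Hyb].
  set (g := - pairing y (A k0)).
  set (s := sumlist (fun k => mu k * pairing y (A k)) K0).
  assert (Hs : 0 <= s) by (apply sumlist_nonneg; intros k Hk; apply Rmult_le_pos; auto).
  apply (in_cone_extend K0 k0 A b mu ((s - pairing y b) / g)); auto.
  - unfold Rdiv. apply Rmult_le_pos; [lra | left; apply Rinv_0_lt_compat; unfold g; lra].
  - intros c Hc. specialize (Hb c Hc). unfold proj_b, proj_A in Hb.
    rewrite (sumlist_ext_in _ (fun k => mu k * pairing y (A k) * A k0 c
               - pairing y (A k0) * (mu k * A k c))) in Hb by (intros; ring).
    rewrite sumlist_sub, sumlist_scalr, sumlist_scal in Hb. fold s in Hb.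
    unfold g. field_simplify_eq; lra.
Qed.

Lemma separation_lift y' : separates K0 proj_A proj_b y' ->
  separates (k0 :: K0) A b (fun c => pairing y' (A k0) * y c - pairing y (A k0) * y' c).
Proof.
  intros [Hy'A Hy'b]. destruct Hy as [HyA Hyb]. split.
  - intros k [<- | Hk]; rewrite pairing_lin_l; [right; ring |].
    specialize (Hy'A k Hk). unfold proj_A in Hy'A. rewrite pairing_lin_r in Hy'A. lra.
  - rewrite pairing_lin_l. unfold proj_b in Hy'b. rewrite pairing_lin_r in Hy'b. lra.
Qed.

End Elimination.

Lemma farkas (K : list I) : NoDup K -> forall (A : I -> C -> R) (b : C -> R),
  in_cone K A b \/ exists y, separates K A b y.
Proof.
  induction 1 as [| k0 K0 Hk0 NK0 IH]; intros A b.
  - destruct (classic (forall c, In c L -> b c = 0)) as [H | H].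
    + left. exists (fun _ => 0). split; [intros k [] |]. intros c Hc; simpl; auto.
    + right. apply not_all_ex_not in H as [c0 Hc0].
      apply imply_to_and in Hc0 as [Hin Hne].
      exists (fun c => - b c). split; [intros k [] |].
      unfold pairing. rewrite <- (sumlist_zero (fun _ => 0) L) by auto.
      apply sumlist_lt.
      * intros c _. pose proof (Rle_0_sqr (b c)). unfold Rsqr in *. lra.
      * exists c0; split; auto. pose proof (Rsqr_pos_lt (b c0) Hne). unfold Rsqr in *. lra.
  - destruct (IH A b) as [[lam [Hl Hb]] | [y Hy]].
    + left. apply (in_cone_extend K0 k0 A b lam 0); auto; [lra |].
      intros c Hc. rewrite Hb by auto. ring.
    + destruct (Rle_or_lt 0 (pairing y (A k0))) as [H0 | H0].
      * right. exists y. destruct Hy as [HyA Hyb]. split; auto. intros k [<- | Hk]; auto.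
      * destruct (IH (proj_A k0 A y) (proj_b k0 A b y)) as [Hc | [y' Hy']].
        -- left. apply (cone_lift k0 K0 A b y); auto.
        -- right. eexists. apply (separation_lift k0 K0 A b y); eauto.
Qed.

End Farkas.

Arguments pairing {C}.
Arguments in_cone {C I}.
Arguments separates {C I}.
Arguments farkas {C I}.

Lemma eqd_sym {T} (x y : T) : eqd x y = eqd y x.
Proof.
  unfold eqd; destruct (excluded_middle_informative (x = y)), (excluded_middle_informative (y = x));
    subst; congruence.
Qed.

(** Couplings and finite Kantorovich duality. *)

Definition is_coupling {X : Type} (S : list X) (u1 u2 : X -> R) (pi : X -> X -> R) : Prop :=
  (forall x y, In x S -> In y S -> 0 <= pi x y) /\
  (forall x, In x S -> sumlist (fun y => pi x y) S = u1 x) /\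
  (forall y, In y S -> sumlist (fun x => pi x y) S = u2 y).

Definition cost {X : Type} (d : X -> X -> R) (S : list X) (pi : X -> X -> R) : R :=
  sumlist (fun x => sumlist (fun y => pi x y * d x y) S) S.

Definition minl {T} (g : T -> R) (j0 : T) (l : list T) : R :=
  fold_right (fun j acc => Rmin (g j) acc) (g j0) l.

Lemma minl_le {T} (g : T -> R) j0 l j : In j l -> minl g j0 l <= g j.
Proof.
  induction l; simpl; intros H; [contradiction |]. destruct H as [-> | H].
  - apply Rmin_l.
  - eapply Rle_trans; [apply Rmin_r | auto].
Qed.

Lemma minl_ge {T} (g : T -> R) j0 l t :
  In j0 l -> (forall j, In j l -> t <= g j) -> t <= minl g j0 l.
Proof.
  intros H0 H. assert (t <= g j0) by auto. clear H0.
  induction l; simpl; auto. apply Rmin_glb; auto with datatypes.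
Qed.

Section Duality.
Variables (X : Type) (d : X -> X -> R) (u1 u2 : X -> R) (S : list X).
Hypotheses (Hmet : is_metric d) (NS : NoDup S)
  (P1 : forall x, 0 <= u1 x) (P2 : forall x, 0 <= u2 x)
  (S1 : forall x, u1 x <> 0 -> In x S) (S2 : forall x, u2 x <> 0 -> In x S)
  (T1 : sumlist u1 S = 1) (T2 : sumlist u2 S = 1).

Lemma KR_set_on_S r : KR_set d u1 u2 r <-> exists g, lipschitz1 d g /\
  r = sumlist (fun x => u1 x * g x) S - sumlist (fun x => u2 x * g x) S.
Proof.
  split.
  - intros [g [l [Hg [[Nl Sg1] [[_ Sg2] Hr]]]]]. exists g. split; auto. rewrite Hr.
    f_equal; apply sumlist_indep; auto; intros x Hx;
      [apply Sg1 | apply S1 | apply Sg2 | apply S2]; intros E; apply Hx; rewrite E; ring.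
  - intros [g [Hg Hr]]. exists g, S. repeat split; auto.
Qed.

Lemma weak_duality pi r : is_coupling S u1 u2 pi -> KR_set d u1 u2 r -> r <= cost d S pi.
Proof.
  intros [Hpi [Hrow Hcol]] Hr. apply KR_set_on_S in Hr as [g [Hg ->]].
  assert (E1 : sumlist (fun x => u1 x * g x) S =
               sumlist (fun x => sumlist (fun y => pi x y * g x) S) S).
  { apply sumlist_ext_in; intros x Hx. rewrite sumlist_scalr, Hrow; auto. }
  assert (E2 : sumlist (fun y => u2 y * g y) S =
               sumlist (fun x => sumlist (fun y => pi x y * g y) S) S).
  { rewrite sumlist_swap. apply sumlist_ext_in; intros y Hy. rewrite sumlist_scalr, Hcol; auto. }
  rewrite E1, E2, <- sumlist_sub. apply sumlist_le; intros x Hx.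
  rewrite <- sumlist_sub. apply sumlist_le; intros y Hy.
  replace (pi x y * g x - pi x y * g y) with (pi x y * (g x - g y)) by ring.
  apply Rmult_le_compat_l; [auto |].
  pose proof (Hg x y). pose proof (Rle_abs (g x - g y)). lra.
Qed.

Lemma product_coupling : is_coupling S u1 u2 (fun x y => u1 x * u2 y).
Proof.
  split; [| split].
  - intros; apply Rmult_le_pos; auto.
  - intros x _. rewrite sumlist_scal, T2. ring.
  - intros y _. rewrite sumlist_scalr, T1. ring.
Qed.

Lemma KR_lub : exists D, is_lub (KR_set d u1 u2) D.
Proof.
  destruct (completeness (KR_set d u1 u2)) as [D HD].
  - exists (cost d S (fun x y => u1 x * u2 y)). intros r Hr.
    apply weak_duality; [apply product_coupling | exact Hr].
  - exists 0. apply KR_set_on_S. exists (fun _ => 0). split.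
    + intros x y. rewrite Rminus_0_r, Rabs_R0. apply Hmet.
    + rewrite !sumlist_zero by (intros; ring). ring.
  - exists D; exact HD.
Qed.

Section Strong.
Variable D : R.
Hypothesis HD : forall r, KR_set d u1 u2 r -> r <= D.

Definition potential (be : X -> R) (j1 : X) (z : X) : R := minl (fun j => d z j + be j) j1 S.

Lemma potential_lipschitz be j1 : In j1 S -> lipschitz1 d (potential be j1).
Proof.
  intros Hj1. destruct Hmet as [_ [_ [Hsym Htri]]].
  assert (Hmono : forall z z', potential be j1 z - d z z' <= potential be j1 z').
  { intros z z'. apply minl_ge; auto. intros j Hj. unfold potential.
    pose proof (minl_le (fun j => d z j + be j) j1 S j Hj). pose proof (Htri z z' j). simpl in *. lra. }
  intros z z'. apply Rabs_le. pose proof (Hmono z z'). pose proof (Hmono z' z).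
  rewrite (Hsym z' z) in *. lra.
Qed.

(* for a dual feasible pair (al, be) with multiplier 1 on d, the dual value
   - sum al u1 - sum be u2 is at most D: test against the potential of be *)
Lemma potential_dual_bound (al be : X -> R) :
  (forall i j, In i S -> In j S -> 0 <= al i + be j + d i j) ->
  0 <= D + sumlist (fun x => al x * u1 x) S + sumlist (fun x => be x * u2 x) S.
Proof.
  intros Hij.
  assert (Hj1 : exists j1, In j1 S) by (destruct S; [simpl in T1; lra | eexists; left; eauto]).
  destruct Hj1 as [j1 Hj1]. set (phi := potential be j1).
  assert (HKR : sumlist (fun x => u1 x * phi x) S - sumlist (fun x => u2 x * phi x) S <= D).
  { apply HD, KR_set_on_S. exists phi. split; [apply potential_lipschitz; auto | reflexivity]. }
  assert (E1 : 0 <= sumlist (fun x => al x * u1 x + u1 x * phi x) S).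
  { apply sumlist_nonneg; intros i Hi.
    replace (al i * u1 i + u1 i * phi i) with (u1 i * (al i + phi i)) by ring.
    apply Rmult_le_pos; auto.
    assert (- al i <= phi i); [| lra].
    apply minl_ge; auto. intros j Hj. specialize (Hij i j Hi Hj). lra. }
  assert (E2 : 0 <= sumlist (fun x => be x * u2 x - u2 x * phi x) S).
  { apply sumlist_nonneg; intros j Hj.
    replace (be j * u2 j - u2 j * phi j) with (u2 j * (be j - phi j)) by ring.
    apply Rmult_le_pos; auto.
    pose proof (minl_le (fun j' => d j j' + be j') j1 S j Hj).
    assert (d j j = 0) by (apply Hmet; reflexivity). unfold phi, potential. simpl in *. lra. }
  rewrite sumlist_add in E1. rewrite sumlist_sub in E2. lra.
Qed.

(* the same bound for an arbitrary nonnegative multiplier la of d; the case la = 0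
   uses the product coupling *)
Lemma dual_certificate (la : R) (al be : X -> R) : 0 <= la ->
  (forall i j, In i S -> In j S -> 0 <= al i + be j + la * d i j) ->
  0 <= la * D + sumlist (fun x => al x * u1 x) S + sumlist (fun x => be x * u2 x) S.
Proof.
  intros [Hla | <-] Hij.
  - assert (Hfeas : forall i j, In i S -> In j S -> 0 <= al i / la + be j / la + d i j).
    { intros i j Hi Hj.
      replace (al i / la + be j / la + d i j) with (/ la * (al i + be j + la * d i j)) by (field; lra).
      apply Rmult_le_pos; [left; apply Rinv_0_lt_compat; lra | auto]. }
    pose proof (potential_dual_bound _ _ Hfeas) as H. cbv beta in H.
    rewrite (sumlist_ext_in (fun x => al x / la * u1 x) (fun x => / la * (al x * u1 x))),
      (sumlist_ext_in (fun x => be x / la * u2 x) (fun x => / la * (be x * u2 x))),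
      !sumlist_scal in H by (intros; unfold Rdiv; ring).
    replace (la * D + sumlist (fun x => al x * u1 x) S + sumlist (fun x => be x * u2 x) S)
      with (la * (D + / la * sumlist (fun x => al x * u1 x) S + / la * sumlist (fun x => be x * u2 x) S))
      by (field; lra).
    apply Rmult_le_pos; lra.
  - assert (E : sumlist (fun i => sumlist (fun j => u1 i * u2 j * (al i + be j)) S) S =
                sumlist (fun x => al x * u1 x) S + sumlist (fun x => be x * u2 x) S).
    { rewrite (sumlist_ext_in _ (fun i => al i * u1 i * sumlist u2 S
                                  + u1 i * sumlist (fun j => be j * u2 j) S)).
      - rewrite sumlist_add, !sumlist_scalr, T1, T2. ring.
      - intros i _. rewrite <- (sumlist_scal (al i * u1 i)), <- sumlist_scal, <- sumlist_add.
        apply sumlist_ext_in; intros; ring. }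
    rewrite Rmult_0_l, Rplus_0_l, <- E.
    apply sumlist_nonneg; intros i Hi; apply sumlist_nonneg; intros j Hj.
    specialize (Hij i j Hi Hj). rewrite Rmult_0_l, Rplus_0_r in Hij.
    apply Rmult_le_pos; [apply Rmult_le_pos |]; auto.
Qed.

(* The coupling problem as a linear system: the unknowns are a slack (column None)
   and the masses pi(i,j) (columns Some (i,j)); the constraints (rows) are
   slack + cost = D (row None) and the two marginal conditions (rows Some (inl x),
   Some (inr x)). *)
Definition lp_rows : list (option (X + X)) :=
  None :: map (fun x => Some (inl x)) S ++ map (fun x => Some (inr x)) S.

Definition lp_cols : list (option (X * X)) := None :: map Some (list_prod S S).

Definition lp_matrix (k : option (X * X)) (c : option (X + X)) : R :=
  match k, c with
  | None, None => 1
  | None, Some _ => 0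
  | Some (i, j), None => d i j
  | Some (i, j), Some (inl x) => eqd x i
  | Some (i, j), Some (inr x) => eqd x j
  end.

Definition lp_rhs (c : option (X + X)) : R :=
  match c with None => D | Some (inl x) => u1 x | Some (inr x) => u2 x end.

Lemma pairing_lp_rows (y v : option (X + X) -> R) : pairing lp_rows y v = y None * v None +
  sumlist (fun x => y (Some (inl x)) * v (Some (inl x))) S +
  sumlist (fun x => y (Some (inr x)) * v (Some (inr x))) S.
Proof. unfold pairing, lp_rows. simpl. rewrite sumlist_app, !sumlist_map. ring. Qed.

Lemma NoDup_lp_cols : NoDup lp_cols.
Proof.
  constructor.
  - intros H; apply in_map_iff in H as [? [? _]]; discriminate.
  - apply FinFun.Injective_map_NoDup; [intros ? ? E; congruence |]. apply NoDup_list_prod; auto.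
Qed.

Lemma coupling_of_cone : in_cone lp_rows lp_cols lp_matrix lp_rhs ->
  exists pi, is_coupling S u1 u2 pi /\ cost d S pi <= D.
Proof.
  intros [lam [Hl Hb]]. exists (fun x y => lam (Some (x, y))).
  assert (HK : forall c, In c lp_rows -> lp_rhs c = lam None * lp_matrix None c +
     sumlist (fun i => sumlist (fun j => lam (Some (i, j)) * lp_matrix (Some (i, j)) c) S) S).
  { intros c Hc. rewrite Hb by auto. simpl. rewrite sumlist_map, sumlist_prod. reflexivity. }
  split; [split; [| split] |].
  - intros x y Hx Hy. apply Hl. right. apply in_map, in_prod; auto.
  - intros x Hx. assert (Hc : In (Some (inl x)) lp_rows).
    { right. apply in_app_iff; left. apply in_map_iff; eauto. }
    specialize (HK _ Hc). simpl in HK. rewrite HK, Rmult_0_r, Rplus_0_l. symmetry.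
    rewrite (sumlist_ext_in _ (fun i => sumlist (fun j => lam (Some (i, j))) S * eqd i x)).
    + rewrite sum_delta by auto. reflexivity.
    + intros i _. rewrite <- sumlist_scalr, eqd_sym. reflexivity.
  - intros z Hz. assert (Hc : In (Some (inr z)) lp_rows).
    { right. apply in_app_iff; right. apply in_map_iff; eauto. }
    specialize (HK _ Hc). simpl in HK. rewrite HK, Rmult_0_r, Rplus_0_l. symmetry.
    apply sumlist_ext_in; intros i _.
    rewrite <- (sum_delta (fun j => lam (Some (i, j))) S z) by auto.
    apply sumlist_ext_in; intros j _. rewrite eqd_sym. reflexivity.
  - specialize (HK None (or_introl eq_refl)). simpl in HK.
    assert (0 <= lam None) by (apply Hl; left; auto). unfold cost. lra.
Qed.

Lemma no_separator y : ~ separates lp_rows lp_cols lp_matrix lp_rhs y.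
Proof.
  intros [Hy Hyb].
  assert (Hla : 0 <= y None).
  { specialize (Hy None (or_introl eq_refl)). rewrite pairing_lp_rows in Hy. simpl in Hy.
    rewrite !sumlist_zero in Hy by (intros; ring). lra. }
  assert (Hij : forall i j, In i S -> In j S ->
            0 <= y (Some (inl i)) + y (Some (inr j)) + y None * d i j).
  { intros i j Hi Hj. assert (Hk : In (Some (i, j)) lp_cols) by (right; apply in_map, in_prod; auto).
    specialize (Hy _ Hk). rewrite pairing_lp_rows in Hy. simpl in Hy.
    rewrite (sum_delta (fun x => y (Some (inl x)))), (sum_delta (fun x => y (Some (inr x)))) in Hy
      by auto. lra. }
  pose proof (dual_certificate (y None) (fun x => y (Some (inl x))) (fun x => y (Some (inr x))) Hla Hij).
  rewrite pairing_lp_rows in Hyb. simpl in Hyb. lra.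
Qed.

Lemma optimal_coupling : exists pi, is_coupling S u1 u2 pi /\ cost d S pi <= D.
Proof.
  destruct (farkas lp_rows lp_cols NoDup_lp_cols lp_matrix lp_rhs) as [Hc | [y Hy]].
  - apply coupling_of_cone; exact Hc.
  - exfalso; exact (no_separator y Hy).
Qed.

End Strong.
End Duality.

Lemma KR_mixture {X I : Type} (d : X -> X -> R) (K : list I) (a c : I -> R)
  (w1 w2 : I -> X -> R) (v1 v2 : X -> R) :
  (forall k, In k K -> 0 <= a k) ->
  (forall k, In k K -> fin_supp (w1 k) /\ fin_supp (w2 k)) ->
  (forall k, In k K -> dKR_le d (w1 k) (w2 k) (c k)) ->
  (forall z, v1 z = sumlist (fun k => a k * w1 k z) K) ->
  (forall z, v2 z = sumlist (fun k => a k * w2 k z) K) ->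
  dKR_le d v1 v2 (sumlist (fun k => a k * c k) K).
Proof.
  intros Ha Hfin Hc E1 E2 r [h [l [Hh [[Nl Sv1] [[_ Sv2] Hr]]]]].
  destruct (support_cover (map w1 K ++ map w2 K) l) as [T [NT [HlT HT]]].
  { intros w Hw. apply in_app_iff in Hw as [Hw | Hw];
      apply in_map_iff in Hw as [k [<- Hk]]; apply Hfin; auto. }
  assert (Hsum : forall (w : I -> X -> R) v, (forall z, v z = sumlist (fun k => a k * w k z) K) ->
            (forall x, v x <> 0 -> In x l) ->
            sumlist (fun x => v x * h x) l = sumlist (fun k => a k * sumlist (fun x => w k x * h x) T) K).
  { intros w v Ev Sv.
    assert (Hvh : forall x, v x * h x <> 0 -> In x l)
      by (intros x Hx; apply Sv; intros E; apply Hx; rewrite E; ring).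
    rewrite (sumlist_indep _ l T Nl NT Hvh (fun x Hx => HlT x (Hvh x Hx))).
    rewrite (sumlist_ext_in _ (fun x => sumlist (fun k => a k * w k x * h x) K))
      by (intros; rewrite Ev, <- sumlist_scalr; reflexivity).
    rewrite sumlist_swap. apply sumlist_ext_in; intros k _.
    rewrite <- sumlist_scal. apply sumlist_ext_in; intros; ring. }
  rewrite Hr, (Hsum w1 v1), (Hsum w2 v2), <- sumlist_sub by auto.
  apply sumlist_le; intros k Hk. rewrite <- Rmult_minus_distr_l.
  apply Rmult_le_compat_l; [auto |]. apply Hc; auto.
  assert (In (w1 k) (map w1 K ++ map w2 K)) by (apply in_or_app; left; apply in_map; auto).
  assert (In (w2 k) (map w1 K ++ map w2 K)) by (apply in_or_app; right; apply in_map; auto).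
  exists h, T. repeat split; eauto.
Qed.

Lemma dKR_le_mono {X : Type} (d : X -> X -> R) (u v : X -> R) (c c' : R) :
  dKR_le d u v c -> c <= c' -> dKR_le d u v c'.
Proof. intros H Hc r Hr. specialize (H r Hr). lra. Qed.

Lemma nonexpansive_selection {X : Type} (d : X -> X -> R) (F : X -> (X -> R) -> Prop) :
  (forall x, exists u, F x u) ->
  (forall x x' u, F x u -> exists u', F x' u' /\ dKR_le d u u' (d x x')) ->
  exists G : X -> X -> (X -> R) -> (X -> R),
    forall x y w, F x w -> F y (G x y w) /\ dKR_le d w (G x y w) (d x y).
Proof.
  intros Hne Hnonexp.
  destruct (choice (fun (t : X * X * (X -> R)) w' =>
              let '(x, y, w) := t in F x w -> F y w' /\ dKR_le d w w' (d x y))) as [g Hg].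
  - intros [[x y] w]. destruct (classic (F x w)) as [Hw | Hw].
    + destruct (Hnonexp x y w Hw) as [w' Hw']. exists w'; auto.
    + destruct (Hne y) as [w' _]. exists w'. intros; contradiction.
  - exists (fun x y w => g (x, y, w)). intros x y w. exact (Hg (x, y, w)).
Qed.

(** Transporting a mixed strategy along a coupling. *)

Section Transport.
Variables (X : Type) (d : X -> X -> R) (F : X -> (X -> R) -> Prop).
Hypothesis HFZ : forall x w, F x w -> is_fprob w.
Variables (G : X -> X -> (X -> R) -> (X -> R)) (w0 : X -> X -> R).
Hypotheses (HG : forall x y w, F x w -> F y (G x y w) /\ dKR_le d w (G x y w) (d x y))
  (Hw0 : forall y, F y (w0 y)).
Variables (u1 u2 : X -> R) (S : list X) (pi : X -> X -> R).
Hypotheses (NS : NoDup S) (P2 : forall x, 0 <= u2 x)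
  (S1 : forall x, u1 x <> 0 -> In x S) (S2 : forall x, u2 x <> 0 -> In x S)
  (Hpi : is_coupling S u1 u2 pi).
Variables (f1 : X -> X -> R) (L1 : X -> list (R * (X -> R))).
Hypothesis HL1 : forall x, (forall p, In p (L1 x) -> 0 <= fst p /\ F x (snd p)) /\
  sumlist fst (L1 x) = 1 /\ f1 x = (fun z => sumlist (fun p => fst p * snd p z) (L1 x)).

Definition moved (y : X) : list (R * (X -> R)) :=
  flat_map (fun x => map (fun p => (pi x y / u2 y * fst p, G x y (snd p))) (L1 x)) S.

Definition transported (y : X) : X -> R :=
  if Rlt_dec 0 (u2 y) then (fun z => sumlist (fun q => fst q * snd q z) (moved y)) else w0 y.

Lemma transported_in_conv y : in_conv (F y) (transported y).
Proof.
  destruct Hpi as [Hpi0 [_ Hcol]].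
  unfold transported. destruct (Rlt_dec 0 (u2 y)) as [Hu | Hu].
  - assert (Hy : In y S) by (apply S2; lra).
    exists (moved y). split; [| split; [| reflexivity]].
    + intros q Hq. unfold moved in Hq. apply in_flat_map in Hq as [x [Hx Hq]].
      apply in_map_iff in Hq as [p [<- Hp]]. simpl.
      destruct (proj1 (HL1 x) p Hp) as [Hp0 HFp]. split; [| apply HG; auto].
      apply Rmult_le_pos; auto. unfold Rdiv.
      apply Rmult_le_pos; [apply Hpi0; auto | left; apply Rinv_0_lt_compat; auto].
    + unfold moved. rewrite sumlist_flat_map.
      rewrite (sumlist_ext_in _ (fun x => pi x y / u2 y)).
      * unfold Rdiv. rewrite sumlist_scalr, Hcol by auto. field. lra.
      * intros x Hx. rewrite sumlist_map. simpl. rewrite sumlist_scal, (proj1 (proj2 (HL1 x))). ring.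
  - exists ((1, w0 y) :: nil). split; [| split].
    + intros p [<- | []]; simpl; split; auto; lra.
    + simpl; ring.
    + apply functional_extensionality; intros z; simpl; ring.
Qed.

Lemma transported_weighted y z : In y S ->
  u2 y * transported y z =
  sumlist (fun x => sumlist (fun p => pi x y * fst p * G x y (snd p) z) (L1 x)) S.
Proof.
  intros Hy. destruct Hpi as [Hpi0 [_ Hcol]].
  unfold transported. destruct (Rlt_dec 0 (u2 y)) as [Hu | Hu].
  - unfold moved. rewrite sumlist_flat_map, <- sumlist_scal. apply sumlist_ext_in; intros x _.
    rewrite sumlist_map, <- sumlist_scal. apply sumlist_ext_in; intros p _. simpl. field. lra.
  - assert (Hu0 : u2 y = 0) by (pose proof (P2 y); lra).
    assert (Hpi_y : forall x, In x S -> pi x y = 0).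
    { apply (sumlist_zero_nonneg (fun x => pi x y)); [intros; apply Hpi0; auto | rewrite Hcol; auto]. }
    rewrite Hu0, Rmult_0_l. symmetry. apply sumlist_zero; intros x Hx.
    apply sumlist_zero; intros p _. rewrite Hpi_y by auto. ring.
Qed.

Definition transfers : list (X * X * (R * (X -> R))) :=
  flat_map (fun x => flat_map (fun y => map (fun p => (x, y, p)) (L1 x)) S) S.

Lemma sumlist_transfers (g : X * X * (R * (X -> R)) -> R) :
  sumlist g transfers =
  sumlist (fun x => sumlist (fun y => sumlist (fun p => g (x, y, p)) (L1 x)) S) S.
Proof.
  unfold transfers. rewrite sumlist_flat_map. apply sumlist_ext_in; intros x _.
  rewrite sumlist_flat_map. apply sumlist_ext_in; intros y _. apply sumlist_map.
Qed.

Lemma in_transfers x y p : In (x, y, p) transfers -> In x S /\ In y S /\ In p (L1 x).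
Proof.
  unfold transfers. intros H. apply in_flat_map in H as [x' [Hx' H]].
  apply in_flat_map in H as [y' [Hy' H]]. apply in_map_iff in H as [p' [E Hp']].
  inversion E; subst. auto.
Qed.

Lemma transport_bound (v1 : X -> R) (l1 : list X) : supp_list u1 l1 ->
  v1 = (fun z => sumlist (fun x => u1 x * f1 x z) l1) ->
  dKR_le d v1 (fun z => sumlist (fun y => u2 y * transported y z) S) (cost d S pi).
Proof.
  intros [Nl1 Sl1] Hv1. destruct Hpi as [Hpi0 [Hrow _]].
  set (a := fun t : X * X * (R * (X -> R)) => let '(x, y, p) := t in pi x y * fst p).
  set (c := fun t : X * X * (R * (X -> R)) => let '(x, y, _) := t in d x y).
  assert (Hcost : sumlist (fun t => a t * c t) transfers = cost d S pi).
  { rewrite sumlist_transfers. unfold cost. apply sumlist_ext_in; intros x _.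
    apply sumlist_ext_in; intros y _. simpl.
    rewrite (sumlist_ext_in _ (fun p => pi x y * d x y * fst p)) by (intros; ring).
    rewrite sumlist_scal, (proj1 (proj2 (HL1 x))). ring. }
  rewrite <- Hcost.
  apply (KR_mixture d transfers a c (fun t => let '(_, _, p) := t in snd p)
           (fun t => let '(x, y, p) := t in G x y (snd p))).
  - intros [[x y] p] Ht. apply in_transfers in Ht as [Hx [Hy Hp]]. simpl.
    apply Rmult_le_pos; [apply Hpi0; auto | apply (proj1 (HL1 x) p Hp)].
  - intros [[x y] p] Ht. apply in_transfers in Ht as [Hx [Hy Hp]].
    pose proof (proj2 (proj1 (HL1 x) p Hp)) as HFp.
    split; apply fprob_fin_supp; [eapply HFZ, HFp | eapply HFZ, HG, HFp].
  - intros [[x y] p] Ht. apply in_transfers in Ht as [Hx [Hy Hp]].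
    apply HG, (proj1 (HL1 x) p Hp).
  - intros z. rewrite Hv1, sumlist_transfers.
    assert (Hsupp : forall x, u1 x * f1 x z <> 0 -> u1 x <> 0)
      by (intros x Hx E; apply Hx; rewrite E; ring).
    rewrite (sumlist_indep _ l1 S Nl1 NS (fun x Hx => Sl1 x (Hsupp x Hx))
               (fun x Hx => S1 x (Hsupp x Hx))).
    apply sumlist_ext_in; intros x Hx.
    rewrite <- Hrow, (proj2 (proj2 (HL1 x))), <- sumlist_scalr by auto.
    apply sumlist_ext_in; intros y _. rewrite <- sumlist_scal.
    apply sumlist_ext_in; intros p _. simpl. ring.
  - intros z. rewrite sumlist_transfers, sumlist_swap.
    apply sumlist_ext_in; intros y Hy. rewrite transported_weighted by auto. reflexivity.
Qed.

End Transport.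

Theorem mainTheorem13 (X : Type) (d : X -> X -> R)
  (Hmet : is_metric d) (Hcomp : seq_compact d)
  (F : X -> (X -> R) -> Prop)
  (HFZ : forall x u, F x u -> is_fprob u)
  (HFne : forall x, exists u, F x u)
  (HFnonexp : forall x x' u, F x u ->
     exists u', F x' u' /\ dKR_le d u u' (d x x')) :
  forall u1 u2 v1, is_fprob u1 -> is_fprob u2 -> mixed_ext F u1 v1 ->
    exists v2, mixed_ext F u2 v2 /\ dKR_le_dKR d v1 v2 u1 u2.
Proof.
  intros u1 u2 v1 Hu1 Hu2 [f1 [l1 [Hf1 [Hl1 Hv1]]]].
  destruct (support_cover (u1 :: u2 :: nil) nil) as [S [NS [_ HS]]].
  { intros w [<- | [<- | []]]; apply fprob_fin_supp; auto. }
  destruct Hu1 as [P1 [la1 [[Na1 Sa1] Ta1]]], Hu2 as [P2 [la2 [[Na2 Sa2] Ta2]]].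
  assert (S1 : forall x, u1 x <> 0 -> In x S) by (intros; apply (HS u1); simpl; auto).
  assert (S2 : forall x, u2 x <> 0 -> In x S) by (intros; apply (HS u2); simpl; auto).
  assert (T1 : sumlist u1 S = 1) by (rewrite <- Ta1; apply sumlist_indep; auto).
  assert (T2 : sumlist u2 S = 1) by (rewrite <- Ta2; apply sumlist_indep; auto).
  destruct (KR_lub X d u1 u2 S Hmet NS P1 P2 S1 S2 T1 T2) as [D [HDub HDleast]].
  destruct (optimal_coupling X d u1 u2 S Hmet NS P1 P2 S1 S2 T1 T2 D HDub) as [pi [Hpi Hcost]].
  destruct (choice _ Hf1) as [L1 HL1].
  destruct (nonexpansive_selection d F HFne HFnonexp) as [G HG].
  destruct (choice _ HFne) as [w0 Hw0].
  exists (fun z => sumlist (fun y => u2 y * transported X G w0 u2 S pi L1 y z) S). split.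
  - exists (transported X G w0 u2 S pi L1), S. split; [| split; [split; auto | reflexivity]].
    intros y. apply (transported_in_conv X d F G w0 HG Hw0 u1 u2 S pi S2 Hpi f1 L1 HL1).
  - intros c Hc. apply dKR_le_mono with (cost d S pi).
    + apply (transport_bound X d F HFZ G w0 HG u1 u2 S pi NS P2 S1 Hpi f1 L1 HL1 v1 l1 Hl1 Hv1).
    + apply Rle_trans with D; [exact Hcost | apply HDleast; exact Hc].
Qed.
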